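(* Let $\mathcal{P}=(P_1,\ldots,P_r)$ be an $r$-tuple of pairwise disjoint finite subsets of $\mathbb{R}^d$. Then: (i) $0\in\operatorname{aff}(\Phi(\mathcal{P}))$ if and only if $\bigcap_{i=1}^r\operatorname{aff}(P_i)\neq\emptyset$ ($\mathcal{P}$ has an affine Tverberg point); (ii) the set $\Phi(\mathcal{P})$ is affinely dependent if and only if at least one of the sets $P_i$ is affinely dependent or $\bigcap_{i=1}^r\operatorname{linaff}(P_i)\neq\{0\}$ ($\mathcal{P}$ has a Tverberg direction).
   Context: Let $N=(d+1)(r-1)$, $w_1,\ldots,w_r\in\mathbb{R}^{r-1}$ the vertices of a regular $(r-1)$-simplex centered at the origin, $x^+=(x,1)\in\mathbb{R}^{d+1}$ for $x\in\mathbb{R}^d$, and $u\otimes v=(u_1v_1,\ldots,u_1v_n,u_2v_1,\ldots,u_mv_n)$ the tensor product. The $i$th clone of $x$ is $\varphi_i(x)=x^+\otimes w_i\in\mathbb{R}^N$, and $\Phi(\mathcal{P})=\bigcup_{i=1}^r\{\varphi_i(p):p\in P_i\}$. $\operatorname{aff}(X)$ is the affine hull of $X$; $\operatorname{linaff}(X)$ is its translate through the origin, i.e., the set of all linear combinations $\sum\beta_ix_i$ with $x_i\in X$ and $\sum\beta_i=0$. *)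

From HB Require Import structures.
From mathcomp Require Import all_boot all_order all_algebra.
Set Implicit Arguments. Unset Strict Implicit. Unset Printing Implicit Defensive.
Import Order.TTheory GRing.Theory Num.Theory.
Local Open Scope ring_scope.

Section Affine.
Variables (R : realFieldType) (n : nat).
Local Notation V := 'rV[R]_n.

(* Finite subsets of R^n are represented by sequences; all notions below
   depend only on the underlying set (we work on [undup s]). *)

Definition in_aff (s : seq V) (x : V) : Prop :=
  exists c : V -> R, \sum_(p <- undup s) c p = 1 /\ x = \sum_(p <- undup s) c p *: p.

Definition in_linaff (s : seq V) (x : V) : Prop :=
  exists c : V -> R, \sum_(p <- undup s) c p = 0 /\ x = \sum_(p <- undup s) c p *: p.

Definition aff_dep (s : seq V) : Prop :=
  exists c : V -> R, [/\ \sum_(p <- undup s) c p = 0,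
                         \sum_(p <- undup s) c p *: p = 0 &
                         exists2 p, p \in s & c p != 0].

Definition sqnorm (v : V) : R := \sum_(k < n) (v 0 k) ^+ 2.
End Affine.

(* tensor product u (x) v = (u1v1,..,u1vn,u2v1,..,umvn) *)
Definition tensor (R : realFieldType) (m n : nat) (u : 'rV[R]_m) (v : 'rV[R]_n)
  : 'rV[R]_(m * n) := mxvec (u^T *m v).

Definition lift1 (R : realFieldType) (d : nat) (x : 'rV[R]_d) : 'rV[R]_(d + 1) :=
  row_mx x (const_mx 1).

Definition regular_simplex_centered (R : realFieldType) (r : nat)
  (w : 'I_r -> 'rV[R]_(r - 1)) : Prop :=
  \sum_(i < r) w i = 0 /\
  exists2 c : R, 0 < c & forall i j : 'I_r, i != j -> sqnorm (w i - w j) = c.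

Definition clone (R : realFieldType) (d r : nat) (w : 'I_r -> 'rV[R]_(r - 1))
  (i : 'I_r) (x : 'rV[R]_d) : 'rV[R]_((d + 1) * (r - 1)) :=
  tensor (lift1 x) (w i).

Definition Phi (R : realFieldType) (d r : nat) (w : 'I_r -> 'rV[R]_(r - 1))
  (P : 'I_r -> seq 'rV[R]_d) : seq 'rV[R]_((d + 1) * (r - 1)) :=
  flatten [seq map (clone w i) (P i) | i <- enum 'I_r].

From HB Require Import structures.
From mathcomp Require Import all_boot all_order all_algebra ring.
Set Implicit Arguments. Unset Strict Implicit. Unset Printing Implicit Defensive.
Import Order.TTheory GRing.Theory Num.Theory.
Local Open Scope ring_scope.

(* Apart from [sum_i w_i = 0], the vertices of a centred regular simplex
   satisfy no linear relation: after subtracting the mean from the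
   coefficients of a relation, the form [sum_(i,j) mu_i mu_j |w_i - w_j|^2]
   both vanishes and equals [- c sum_i mu_i^2].  Hence [sum_i a_i (x) w_i = 0]
   iff all [a_i] coincide.  A combination of [Phi(P)] with coefficients [C]
   equals [sum_i (sum_p C(i,p) p^+) (x) w_i], so it vanishes iff all blocks
   have the same weighted sum [x] and the same total mass [m].  With total
   weight 1 we get [m = 1/r] and the Tverberg point [r x]; with total weight 0
   we get [m = 0], and [x] is either a Tverberg direction or [0], in which
   case the block carrying a nonzero coefficient is affinely dependent. *)

Lemma sum_mul_sqrB (R : comRingType) (I : finType) (mu x : I -> R) :
  \sum_i \sum_j mu i * mu j * (x i - x j) ^+ 2 =
  ((\sum_i mu i) * (\sum_i mu i * x i ^+ 2) - (\sum_i mu i * x i) ^+ 2) *+ 2.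
Proof.
have expand i j : mu i * mu j * (x i - x j) ^+ 2 =
    (mu i * x i ^+ 2) * mu j + mu i * (mu j * x j ^+ 2)
    - ((mu i * x i) * (mu j * x j)) *+ 2 by ring.
under eq_bigr => i _ do under eq_bigr => j _ do rewrite expand.
under eq_bigr => i _ do rewrite sumrB big_split /= sumrMnl.
rewrite sumrB big_split /= sumrMnl -!big_distrlr /=; ring.
Qed.

Lemma sqnorm0 (R : realFieldType) n : sqnorm (0 : 'rV[R]_n) = 0.
Proof. by rewrite /sqnorm big1 // => k _; rewrite mxE expr0n. Qed.

Lemma const_sum (V : zmodType) (r : nat) (s : 'I_r -> V) :
  (forall i j, s i = s j) -> forall i, s i *+ r = \sum_j s j.
Proof.
move=> s_const i; rewrite -[in LHS](card_ord r) -sumr_const.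
by apply: eq_bigr => j _.
Qed.

Section Tensor.
Variable R : realFieldType.

Lemma trmx_mul_rowE m n (u : 'rV[R]_m) (v : 'rV[R]_n) k l :
  (u^T *m v) k l = u 0 k * v 0 l.
Proof. by rewrite !mxE big_ord1 !mxE. Qed.

Lemma tensor_suml m n (T : Type) (s : seq T) (a : T -> R) (u : T -> 'rV[R]_m)
    (v : 'rV[R]_n) :
  \sum_(p <- s) a p *: tensor (u p) v = tensor (\sum_(p <- s) a p *: u p) v.
Proof.
rewrite /tensor raddf_sum mulmx_suml raddf_sum /=; apply: eq_bigr => p _.
by rewrite linearZ /= -scalemxAl linearZ.
Qed.

Lemma tensor_sumr m n (I : finType) (u : 'rV[R]_m) (v : I -> 'rV[R]_n) :
  \sum_i tensor u (v i) = tensor u (\sum_i v i).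
Proof. by rewrite /tensor mulmx_sumr raddf_sum. Qed.

Lemma tensor0r m n (u : 'rV[R]_m) : tensor u (0 : 'rV[R]_n) = 0.
Proof. by rewrite /tensor mulmx0 linear0. Qed.

Lemma tensor_injl m n (v : 'rV[R]_n) : v != 0 ->
  injective (fun u : 'rV[R]_m => tensor u v).
Proof.
move=> v_neq0 x y /(can_inj mxvecK) xv_yv.
have [l vl_neq0] : exists l, v 0 l != 0.
  apply/existsP; apply: contraR v_neq0 => /existsPn vl0.
  by apply/eqP/rowP => l; rewrite mxE; apply/eqP/negbNE.
apply/rowP => k; apply: (mulIf vl_neq0).
by rewrite -!trmx_mul_rowE xv_yv.
Qed.

Lemma lift1_inj d : injective (@lift1 R d).
Proof. by move=> x y /eq_row_mx []. Qed.

Lemma tensor_lift1_inj d m (x y : 'rV[R]_d) (u v : 'rV[R]_m) : u != 0 ->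
  tensor (lift1 x) u = tensor (lift1 y) v -> x = y /\ u = v.
Proof.
move=> u_neq0 xu_yv.
have u_v : u = v.
  apply/rowP => l; move/(can_inj mxvecK): xu_yv.
  move/(congr1 (fun M : 'M_(d + 1, m) => M (rshift d ord0) l)).
  by rewrite !trmx_mul_rowE /lift1 !row_mxEr !mxE !mul1r.
by split=> //; apply: lift1_inj; apply: (tensor_injl u_neq0); rewrite /= xu_yv u_v.
Qed.

End Tensor.

Section RegularSimplex.
Variables (R : realFieldType) (r n : nat) (w : 'I_r -> 'rV[R]_n) (c : R).
Hypothesis c_gt0 : 0 < c.
Hypothesis sqnorm_wB : forall i j, i != j -> sqnorm (w i - w j) = c.

Lemma injective_vertices : injective w.
Proof.
move=> i j wij; apply/eqP; apply: contraT => /sqnorm_wB.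
by rewrite wij subrr sqnorm0 => c0; move: c_gt0; rewrite -c0 ltxx.
Qed.

Lemma vertices_affine_free (mu : 'I_r -> R) :
  \sum_i mu i = 0 -> \sum_i mu i *: w i = 0 -> forall i, mu i = 0.
Proof.
move=> sum_mu sum_mu_w.
have form0 : \sum_i \sum_j mu i * mu j * sqnorm (w i - w j) = 0.
  under eq_bigr => i _ do under eq_bigr => j _ do rewrite /sqnorm mulr_sumr.
  under eq_bigr => i _ do rewrite exchange_big.
  rewrite exchange_big /= big1 // => k _.
  under eq_bigr => i _ do under eq_bigr => j _ do rewrite !mxE.
  have sum_mu_wk : \sum_i mu i * w i 0 k = 0.
    have := congr1 (fun v : 'rV[R]_n => v 0 k) sum_mu_w; rewrite summxE mxE.
    by under eq_bigr do rewrite mxE.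
  by rewrite sum_mul_sqrB sum_mu sum_mu_wk mul0r expr0n subr0 mul0rn.
have form_row i : \sum_j mu i * mu j * sqnorm (w i - w j) = - (c * mu i ^+ 2).
  rewrite (bigD1 i) //= subrr sqnorm0 mulr0 add0r.
  rewrite (eq_bigr (fun j => c * (mu i * mu j))); last first.
    by move=> j ji; rewrite sqnorm_wB 1?eq_sym // mulrC.
  rewrite -mulr_sumr.
  have : \sum_j mu i * mu j = 0 by rewrite -mulr_sumr sum_mu mulr0.
  rewrite (bigD1 i) //= => /eqP; rewrite addrC addr_eq0 => /eqP ->.
  by rewrite mulrN expr2.
have sum_sqr0 : \sum_i mu i ^+ 2 = 0.
  move: form0; under eq_bigr do rewrite form_row.
  rewrite sumrN -mulr_sumr => /eqP; rewrite oppr_eq0 mulf_eq0 gt_eqF //=.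
  by move/eqP.
move=> i; apply/eqP; rewrite -sqrf_eq0; apply/eqP.
by apply: (psumr_eq0P _ sum_sqr0) => // j _; rewrite sqr_ge0.
Qed.

Hypothesis sum_w : \sum_i w i = 0.

Lemma vertices_lin_rel_const (lam : 'I_r -> R) :
  \sum_i lam i *: w i = 0 -> forall i j, lam i = lam j.
Proof.
move=> sum_lam_w i0.
have r_neq0 : (r%:R : R) != 0 by rewrite pnatr_eq0 -lt0n (leq_ltn_trans _ (ltn_ord i0)).
pose m := (\sum_i lam i) / r%:R.
have sum_mu : \sum_i (lam i - m) = 0.
  by rewrite sumrB sumr_const card_ord -mulr_natr /m divfK // subrr.
have sum_mu_w : \sum_i (lam i - m) *: w i = 0.
  under eq_bigr do rewrite scalerBl.
  by rewrite sumrB sum_lam_w -scaler_sumr sum_w scaler0 subrr.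
have lam_m := vertices_affine_free sum_mu sum_mu_w.
by move=> j; apply: (addIr (- m)); rewrite !lam_m.
Qed.

Hypothesis r_gt1 : (1 < r)%N.

Lemma vertex_neq0 i : w i != 0.
Proof.
apply/eqP => wi0.
have [j ji] : exists j : 'I_r, j != i.
  have [i1 i2] : (0 < r)%N /\ (1 < r)%N by split=> //; apply: ltnW.
  case: (eqVneq i (Ordinal i1)) => [->|]; last by exists (Ordinal i1); rewrite eq_sym.
  by exists (Ordinal i2).
have : \sum_k (k == i)%:R *: w k = 0.
  rewrite (bigD1 i) //= eqxx scale1r wi0 add0r big1 // => k ki.
  by rewrite (negbTE ki) scale0r.
move/vertices_lin_rel_const/(_ i j); rewrite eqxx (negbTE ji).
by move/eqP; rewrite oner_eq0.
Qed.

Lemma sum_tensor_vertices_eq0 m (a : 'I_r -> 'rV[R]_m) :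
  \sum_i tensor (a i) (w i) = 0 <-> forall i j, a i = a j.
Proof.
split=> [sum_aw0 i j | a_const].
  have sum_outer0 : \sum_i (a i)^T *m w i = 0.
    by apply/eqP; rewrite -mxvec_eq0 raddf_sum; apply/eqP.
  apply/rowP => k; apply: (vertices_lin_rel_const (lam := fun i => a i 0 k)).
  apply/rowP => l; have := congr1 (fun M : 'M_(m, n) => M k l) sum_outer0.
  rewrite summxE !mxE => <-; rewrite summxE.
  by apply: eq_bigr => t _; rewrite trmx_mul_rowE !mxE.
pose i0 : 'I_r := Ordinal (ltnW r_gt1).
rewrite (eq_bigr (fun i => tensor (a i0) (w i))) => [|i _]; last by rewrite (a_const i i0).
by rewrite tensor_sumr sum_w tensor0r.
Qed.

End RegularSimplex.

Definition lift_comb (R : realFieldType) d (s : seq 'rV[R]_d) (a : 'rV[R]_d -> R)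
  : 'rV[R]_(d + 1) := \sum_(p <- undup s) a p *: lift1 p.

Lemma lift_combE (R : realFieldType) d (s : seq 'rV[R]_d) (a : 'rV[R]_d -> R) :
  lift_comb s a = row_mx (\sum_(p <- undup s) a p *: p) (const_mx (\sum_(p <- undup s) a p)).
Proof.
rewrite /lift_comb; elim: (undup s) => [|p t IH].
  by rewrite !big_nil; apply/rowP => k; rewrite !mxE; case: splitP => ? _; rewrite mxE.
rewrite !big_cons IH /lift1 scale_row_mx add_row_mx; congr row_mx.
by apply/rowP => k; rewrite !mxE mulr1.
Qed.

Lemma lift_comb_inj (R : realFieldType) d (s t : seq 'rV[R]_d) (a b : 'rV[R]_d -> R) :
  lift_comb s a = lift_comb t b ->
  \sum_(p <- undup s) a p *: p = \sum_(p <- undup t) b p *: p /\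
  \sum_(p <- undup s) a p = \sum_(p <- undup t) b p.
Proof.
rewrite !lift_combE => /eq_row_mx [-> /(congr1 (fun M : 'rV[R]_1 => M 0 0))].
by rewrite !mxE.
Qed.

Lemma exists_coef_neq0 (R : ringType) (V : lmodType R) (s : seq V) (a : V -> R) :
  \sum_(p <- s) a p *: p != 0 -> exists2 p, p \in s & a p != 0.
Proof.
move=> comb_neq0.
have [/hasP [p ps ap] | /hasPn all_a0] := boolP (has (fun p => a p != 0) s).
  by exists p.
move: comb_neq0; rewrite big1_seq ?eqxx // => p /andP [_ ps].
by move/negbNE/eqP: (all_a0 p ps) => ->; rewrite scale0r.
Qed.

Section Clones.
Variables (R : realFieldType) (d r : nat) (w : 'I_r -> 'rV[R]_(r - 1)) (c : R).
Hypothesis c_gt0 : 0 < c.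
Hypothesis sqnorm_wB : forall i j, i != j -> sqnorm (w i - w j) = c.
Hypothesis sum_w : \sum_i w i = 0.
Hypothesis r_gt1 : (1 < r)%N.
Variable P : 'I_r -> seq 'rV[R]_d.

Lemma clone_inj i j (x y : 'rV[R]_d) : clone w i x = clone w j y -> i = j /\ x = y.
Proof.
move/(tensor_lift1_inj (vertex_neq0 c_gt0 sqnorm_wB sum_w r_gt1 i)) => [-> wij].
by rewrite (injective_vertices c_gt0 sqnorm_wB wij).
Qed.

Lemma mem_clone i p : p \in P i -> clone w i p \in Phi w P.
Proof. by move=> pP; apply/flatten_mapP; exists i; rewrite ?mem_enum ?map_f. Qed.

Lemma mem_PhiP q : q \in Phi w P -> exists i, exists2 p, p \in P i & q = clone w i p.
Proof. by case/flatten_mapP => i _ /mapP [p pP ->]; exists i, p. Qed.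

Lemma sum_Phi (V : zmodType) (F : 'rV[R]_((d + 1) * (r - 1)) -> V) :
  \sum_(q <- undup (Phi w P)) F q = \sum_i \sum_(p <- undup (P i)) F (clone w i p).
Proof.
have Phi_perm : perm_eq (undup (Phi w P))
    [seq clone w i p | i <- enum 'I_r, p <- undup (P i)].
  apply: uniq_perm; first exact: undup_uniq.
    apply: allpairs_uniq_dep; [exact: enum_uniq | by move=> i _; exact: undup_uniq | ].
    by move=> [i x] [j y] _ _ /= /clone_inj [-> ->].
  move=> q; rewrite mem_undup.
  apply: (mem_allpairs_dep (clone w)) => // i _ x.
  by rewrite mem_undup.
by rewrite (perm_big _ Phi_perm) big_allpairs_dep big_enum.
Qed.

(* A choice-free gluing of per-block coefficients: it takes the intended values
   on clones because distinct pairs [(i, p)] have distinct clones. *)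
Definition Phi_coef (f : 'I_r -> 'rV[R]_d -> R) (q : 'rV[R]_((d + 1) * (r - 1))) : R :=
  \sum_i \sum_(p <- undup (P i)) (q == clone w i p)%:R * f i p.

Lemma Phi_coef_clone f i p : p \in P i -> Phi_coef f (clone w i p) = f i p.
Proof.
move=> pP; rewrite /Phi_coef (bigD1 i) //= [X in _ + X]big1 ?addr0 => [|j ji]; last first.
  apply: big1 => p' _; case: eqP => [/clone_inj [ij _]|]; last by rewrite mul0r.
  by rewrite ij eqxx in ji.
rewrite (bigD1_seq p) ?mem_undup ?undup_uniq //= eqxx mul1r big1 ?addr0 // => p' p'p.
by case: eqP => [/clone_inj [_ pp']|]; [rewrite pp' eqxx in p'p | rewrite mul0r].
Qed.

Lemma Phi_combination (C : 'rV[R]_((d + 1) * (r - 1)) -> R) (f : 'I_r -> 'rV[R]_d -> R) :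
    (forall i, {in P i, forall p, C (clone w i p) = f i p}) ->
  \sum_(q <- undup (Phi w P)) C q = \sum_i \sum_(p <- undup (P i)) f i p /\
  (\sum_(q <- undup (Phi w P)) C q *: q = 0 <->
   forall i j, lift_comb (P i) (f i) = lift_comb (P j) (f j)).
Proof.
move=> Cf; have Cf_undup i : {in undup (P i), forall p, C (clone w i p) = f i p}.
  by move=> p; rewrite mem_undup; apply: Cf.
split; rewrite sum_Phi.
  by apply: eq_bigr => i _; apply: eq_big_seq; apply: Cf_undup.
rewrite -(sum_tensor_vertices_eq0 c_gt0 sqnorm_wB sum_w r_gt1).
suff -> : \sum_i \sum_(p <- undup (P i)) C (clone w i p) *: clone w i p =
          \sum_i tensor (lift_comb (P i) (f i)) (w i) by [].
apply: eq_bigr => i _; rewrite -tensor_suml; apply: eq_big_seq => p pP.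
by rewrite Cf_undup.
Qed.

Lemma Phi_relation_blocks (C : 'rV[R]_((d + 1) * (r - 1)) -> R) :
    \sum_(q <- undup (Phi w P)) C q *: q = 0 ->
  (forall i j, \sum_(p <- undup (P i)) C (clone w i p) *: p =
               \sum_(p <- undup (P j)) C (clone w j p) *: p) /\
  (forall i, (\sum_(p <- undup (P i)) C (clone w i p)) *+ r =
             \sum_(q <- undup (Phi w P)) C q).
Proof.
move=> CPhi0.
have [sum_C /iffLR /(_ CPhi0) blocks_eq] :=
  Phi_combination (f := fun i p => C (clone w i p)) (fun i p _ => erefl).
split=> [i j | i]; first by case: (lift_comb_inj (blocks_eq i j)).
by rewrite sum_C; apply: const_sum => j k; case: (lift_comb_inj (blocks_eq j k)).
Qed.

Lemma Tverberg_point_of_aff_Phi :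
  in_aff (Phi w P) 0 -> exists x, forall i, in_aff (P i) x.
Proof.
case=> C [sum_C1 CPhi0]; have [comb_eq mass_r] := Phi_relation_blocks (esym CPhi0).
pose i0 : 'I_r := Ordinal (ltnW r_gt1).
exists (r%:R *: \sum_(p <- undup (P i0)) C (clone w i0 p) *: p) => i.
exists (fun p => r%:R * C (clone w i p)); split.
  by rewrite -mulr_sumr mulr_natl mass_r.
by rewrite (comb_eq i0 i) scaler_sumr; apply: eq_bigr => p _; rewrite scalerA.
Qed.

Lemma aff_Phi_of_Tverberg_point :
  (exists x, forall i, in_aff (P i) x) -> in_aff (Phi w P) 0.
Proof.
case=> x /fin_all_exists [a aff_a].
have r_neq0 : (r%:R : R) != 0 by rewrite pnatr_eq0 -lt0n ltnW.
pose f i p := a i p / r%:R.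
have [sum_C /iffRL blocks_eq0] := Phi_combination (Phi_coef_clone f).
exists (Phi_coef f); split.
  rewrite sum_C (eq_bigr (fun _ => r%:R^-1)) => [|i _].
    by rewrite sumr_const card_ord -[r%:R^-1 *+ r]mulr_natr mulVf.
  by rewrite /f -mulr_suml (proj1 (aff_a i)) mul1r.
suff lift_comb_f i : lift_comb (P i) (f i) = row_mx (r%:R^-1 *: x) (const_mx r%:R^-1).
  by symmetry; apply: blocks_eq0 => i j; rewrite !lift_comb_f.
rewrite lift_combE /f -mulr_suml (proj1 (aff_a i)) mul1r (proj2 (aff_a i)) scaler_sumr.
by congr row_mx; apply: eq_bigr => p _; rewrite scalerA mulrC.
Qed.

Lemma Tverberg_of_aff_dep_Phi :
  aff_dep (Phi w P) ->
  (exists i, aff_dep (P i)) \/ exists2 v, v != 0 & forall i, in_linaff (P i) v.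
Proof.
case=> C [sum_C0 CPhi0 [q qPhi Cq]]; have [comb_eq mass_r] := Phi_relation_blocks CPhi0.
have mass0 i : \sum_(p <- undup (P i)) C (clone w i p) = 0.
  have /eqP := mass_r i; rewrite sum_C0 mulrn_eq0 gtn_eqF ?(ltnW r_gt1) //=.
  by move/eqP.
have [i [p pP q_clone]] := mem_PhiP qPhi; subst q.
have [comb0 | comb_neq0] := eqVneq (\sum_(p <- undup (P i)) C (clone w i p) *: p) 0.
  by left; exists i, (fun p => C (clone w i p)); split=> //; exists p.
right; exists (\sum_(p <- undup (P i)) C (clone w i p) *: p) => // j.
by exists (fun p => C (clone w j p)); rewrite (comb_eq i j).
Qed.

Lemma aff_dep_Phi_of_block :
  (exists i, aff_dep (P i)) -> aff_dep (Phi w P).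
Proof.
case=> i [a [sum_a0 comb_a0 [p pP ap]]].
pose f j p := if j == i then a p else 0.
have [sum_C /iffRL blocks_eq0] := Phi_combination (Phi_coef_clone f).
have lift_comb_f j : lift_comb (P j) (f j) = 0.
  rewrite lift_combE /f; case: eqP => [->|_]; first by rewrite sum_a0 comb_a0 row_mx0.
  by rewrite big1 ?big1 ?row_mx0 // => p' _; rewrite scale0r.
exists (Phi_coef f); split.
- rewrite sum_C big1 // => j _; rewrite /f.
  by case: eqP => [->|_]; [exact: sum_a0 | exact: big1_eq].
- by apply: blocks_eq0 => j k; rewrite !lift_comb_f.
- by exists (clone w i p); rewrite ?mem_clone ?Phi_coef_clone /f ?eqxx.
Qed.

Lemma aff_dep_Phi_of_direction :
  (exists2 v, v != 0 & forall i, in_linaff (P i) v) -> aff_dep (Phi w P).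
Proof.
case=> v v_neq0 /fin_all_exists [a lin_a].
have [sum_C /iffRL blocks_eq0] := Phi_combination (Phi_coef_clone a).
have lift_comb_a i : lift_comb (P i) (a i) = row_mx v (const_mx 0).
  by rewrite lift_combE (proj1 (lin_a i)) -(proj2 (lin_a i)).
pose i0 : 'I_r := Ordinal (ltnW r_gt1).
have [p pP ap] : exists2 p, p \in undup (P i0) & a i0 p != 0.
  by apply: exists_coef_neq0; rewrite -(proj2 (lin_a i0)).
exists (Phi_coef a); split.
- by rewrite sum_C big1 // => i _; rewrite (proj1 (lin_a i)).
- by apply: blocks_eq0 => i j; rewrite !lift_comb_a.
- by rewrite mem_undup in pP; exists (clone w i0 p); rewrite ?mem_clone ?Phi_coef_clone.
Qed.

End Clones.

Theorem lemma4 (R : realFieldType) (d r : nat) (hr : (2 <= r)%N)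
  (w : 'I_r -> 'rV[R]_(r - 1)) (hw : regular_simplex_centered w)
  (P : 'I_r -> seq 'rV[R]_d)
  (hdisj : forall i j : 'I_r, i != j -> forall x, x \in P i -> x \notin P j) :
  (in_aff (Phi w P) 0 <-> exists x : 'rV[R]_d, forall i, in_aff (P i) x) /\
  (aff_dep (Phi w P) <->
     (exists i, aff_dep (P i)) \/
     exists2 v : 'rV[R]_d, v != 0 & forall i, in_linaff (P i) v).
Proof.
have [sum_w [c c_gt0 sqnorm_wB]] := hw.
split; split.
- exact: (Tverberg_point_of_aff_Phi c_gt0 sqnorm_wB sum_w hr).
- exact: (aff_Phi_of_Tverberg_point c_gt0 sqnorm_wB sum_w hr).
- exact: (Tverberg_of_aff_dep_Phi c_gt0 sqnorm_wB sum_w hr).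
- case; [exact: (aff_dep_Phi_of_block c_gt0 sqnorm_wB sum_w hr) |
         exact: (aff_dep_Phi_of_direction c_gt0 sqnorm_wB sum_w hr)].
Qed.
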